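(* Let $d\geq 1$, let $p=p_d=\frac{2d+1}{4d}$, let $(S_n)$ be the $d$-dimensional elephant random walk with memory parameter $p$, and let $G_n=\frac{1}{n}\sum_{k=1}^n S_k$. Then $$\lim_{n\to\infty}\frac{1}{\sqrt{n}\log n}G_n=0\quad\text{a.s.}$$
   Context: The $d$-dimensional elephant random walk (ERW) with memory parameter $p\in[0,1]$ is defined as follows. Let $e_1,\dots,e_d$ be the standard basis of $\mathbb{R}^d$; the $2d$ directions are $\pm e_1,\dots,\pm e_d$. Set $S_0=0$. The first step $X_1$ is uniformly distributed on the $2d$ directions. For $n\geq 1$, given $X_1,\dots,X_n$, an index $k$ is chosen uniformly at random in $\{1,\dots,n\}$, and then $X_{n+1}=X_k$ with probability $p$, while $X_{n+1}$ equals each of the $2d-1$ remaining directions with probability $(1-p)/(2d-1)$. The position is $S_{n+1}=S_n+X_{n+1}$. The case $p=p_d$ is the critical regime. *)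

From HB Require Import structures.
From mathcomp Require Import all_boot all_order all_algebra.
From mathcomp Require Import all_classical all_reals all_analysis.
Set Implicit Arguments. Unset Strict Implicit. Unset Printing Implicit Defensive.
Import Order.TTheory GRing.Theory Num.Theory.
Import numFieldNormedType.Exports.
Local Open Scope classical_set_scope.
Local Open Scope ring_scope.

(* The 2d directions +-e_i : a pair (i, s) stands for e_i if s = true,
   and for -e_i if s = false. *)
Definition dir (d : nat) := ('I_d * bool)%type.

Definition dir_coord {R : realType} {d : nat} (x : dir d) (j : 'I_d) : R :=
  if x.1 == j then (if x.2 then 1 else -1) else 0.

Definition p_crit {R : realType} (d : nat) : R := (2 * d + 1)%:R / (4 * d)%:R.

(* Transition probability of the ERW: given the first n steps x 0, ..., x (n-1)
   (n >= 1), the probability that step n+1 equals y: a uniform index k among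
   the n past steps is drawn, then y = x k w.p. p, and each of the 2d-1 other
   directions w.p. (1-p)/(2d-1). *)
Definition erw_trans {R : realType} (d : nat) (p : R) (n : nat)
  (x : nat -> dir d) (y : dir d) : R :=
  n%:R^-1 * \sum_(k < n) (if x k == y then p else (1 - p) / (2 * d - 1)%:R).

(* Cylinder event {X_0 = x 0, ..., X_(n-1) = x (n-1)}  (0-indexed steps:
   X k is the (k+1)-th step of the walk) *)
Definition cyl {T : Type} {d : nat} (X : nat -> T -> dir d) (n : nat)
  (x : nat -> dir d) : set T :=
  [set t | forall k, (k < n)%N -> X k t = x k].

(* X is (the step sequence of) a d-dimensional elephant random walk with
   memory parameter p under P: its finite-dimensional distributions are those
   of the ERW. *)
Definition is_ERW {dT : measure_display} {T : measurableType dT} {R : realType}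
  (P : probability T R) (d : nat) (p : R) (X : nat -> T -> dir d) : Prop :=
  (forall n y, measurable [set t | X n t = y]) /\
  (forall y, P [set t | X 0%N t = y] = ((2 * d)%:R^-1)%:E) /\
  (forall n x y, (0 < n)%N ->
     P (cyl X n.+1 (fun k => if k == n then y else x k))
     = ((erw_trans p n x y)%:E * P (cyl X n x))%E).

Definition erw_S {T : Type} {R : realType} {d : nat} (X : nat -> T -> dir d)
  (n : nat) (t : T) (j : 'I_d) : R :=
  \sum_(k < n) dir_coord (X k t) j.

Definition erw_G {T : Type} {R : realType} {d : nat} (X : nat -> T -> dir d)
  (n : nat) (t : T) (j : 'I_d) : R :=
  n%:R^-1 * \sum_(1 <= k < n.+1) erw_S X k t j.

From HB Require Import structures.
From mathcomp Require Import all_boot all_order all_algebra.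
From mathcomp Require Import all_classical all_reals all_analysis.
From mathcomp Require Import ring lra.
Set Implicit Arguments. Unset Strict Implicit. Unset Printing Implicit Defensive.
Import Order.TTheory GRing.Theory Num.Theory.
Import numFieldNormedType.Exports.
Local Open Scope classical_set_scope.
Local Open Scope ring_scope.

(* Fix a coordinate j and let S_n be the j-th coordinate of the walk. At the
   critical parameter the conditional mean of the next step is S_n / (2n), so
   V_n = S_n^2 / n satisfies E[V_(n+1) | F_n] = V_n + E[X_(n+1,j)^2 | F_n] / (n+1):
   V is a nonnegative submartingale with E V_n <= H_n, the harmonic number.
   Doob's maximal inequality along the blocks N_m = 2^(4^m) with levels
   l_m = 2^(m+1) (4^(m+1) + 1) gives P(max_(k <= N_(m+1)) V_k > l_m) <= 2^-(m+1),
   so by Borel-Cantelli almost surely, for m large, |S_k| <= sqrt(k l_m) for all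
   k <= N_(m+1). For N_m <= n < N_(m+1) this bounds |G_n| by sqrt(n l_m), and
   sqrt(l_m) = O(2^(3m/2)) is o(log N_m) = o(4^m).
   Expectations at a finite horizon are finite sums over step sequences, weighted
   by their law, which the ERW hypothesis factors through a transition kernel. *)

Section PathSpace.
Variables (R : realFieldType) (D : finType).

Fixpoint paths (n : nat) : seq (seq D) :=
  if n is n'.+1 then [seq rcons s y | s <- paths n', y <- enum D] else [:: [::]].

Lemma mem_paths n s : (s \in paths n) = (size s == n).
Proof.
elim: n s => [|n IHn] s /=; first by rewrite inE; case: s.
apply/allpairsP/idP => [[[s' y] /= [s'_in _ ->]]|].
  by rewrite size_rcons eqSS -IHn.
case/lastP: s => [//|s y]; rewrite size_rcons eqSS -IHn => s_in.
by exists (s, y); rewrite /= mem_enum.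
Qed.

Lemma uniq_paths n : uniq (paths n).
Proof.
elim: n => [//|n IHn] /=; apply: allpairs_uniq => //; first exact: enum_uniq.
by move=> [s y] [s' y'] _ _ /= /rcons_inj.
Qed.

Variable kernel : seq D -> D -> R.
Hypothesis kernel_ge0 : forall s y, 0 <= kernel s y.
Hypothesis kernel_sum1 : forall s, \sum_y kernel s y = 1.

Variable law : seq D -> R.
Hypothesis law_nil : law [::] = 1.
Hypothesis law_rcons : forall s y, law (rcons s y) = kernel s y * law s.

Definition expect (n : nat) (F : seq D -> R) : R := \sum_(s <- paths n) F s * law s.

Lemma law_ge0 s : 0 <= law s.
Proof.
by elim/last_ind: s => [|s y IHs]; rewrite ?law_nil ?law_rcons ?mulr_ge0.
Qed.

Lemma expect0 F : expect 0 F = F [::].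
Proof. by rewrite /expect big_seq1 law_nil mulr1. Qed.

Lemma expectS n F :
  expect n.+1 F = expect n (fun s => \sum_y kernel s y * F (rcons s y)).
Proof.
rewrite /expect big_allpairs_dep /=; apply: eq_bigr => s _.
by rewrite big_enum mulr_suml; apply: eq_bigr => y _; rewrite law_rcons; ring.
Qed.

Lemma ler_expect n F G :
  (forall s, size s = n -> F s <= G s) -> expect n F <= expect n G.
Proof.
move=> leFG; rewrite /expect !big_seq; apply: ler_sum => s.
by rewrite mem_paths => /eqP /leFG; apply: (ler_wpM2r (law_ge0 s)).
Qed.

Lemma expectD n F G : expect n (F \+ G) = expect n F + expect n G.
Proof. by rewrite /expect -big_split; apply: eq_bigr => s _; rewrite mulrDl. Qed.

Lemma expectZ n a F : expect n (fun s => a * F s) = a * expect n F.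
Proof. by rewrite /expect mulr_sumr; apply: eq_bigr => s _; rewrite mulrA. Qed.

Lemma expect_cst n a : expect n (fun=> a) = a.
Proof.
elim: n => [|n IHn]; first by rewrite expect0.
rewrite expectS -[RHS]IHn /expect; apply: eq_bigr => s _.
by rewrite -mulr_suml kernel_sum1 mul1r.
Qed.

Lemma expect_le_increments (F : seq D -> R) (u : nat -> R) n :
  (forall s, \sum_y kernel s y * F (rcons s y) <= F s + u (size s)) ->
  expect n F <= F [::] + \sum_(k < n) u k.
Proof.
move=> incF; elim: n => [|n IHn]; first by rewrite expect0 big_ord0 addr0.
rewrite expectS big_ord_recr addrA.
apply: le_trans (_ : expect n (F \+ fun=> u n) <= _).
  by apply: ler_expect => s <-; apply: incF.
by rewrite expectD expect_cst lerD2r.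
Qed.

Definition exceeds (lam : R) (F : seq D -> R) (s : seq D) : bool :=
  has (fun k => lam < F (take k s)) (iota 0 (size s).+1).

Lemma exceeds_rcons lam F s y :
  exceeds lam F (rcons s y) = exceeds lam F s || (lam < F (rcons s y)).
Proof.
rewrite /exceeds size_rcons -[(size s).+2]addn1 iotaD has_cat add0n.
rewrite [iota _ 1]/= has_seq1 take_oversize ?size_rcons //; congr (_ || _).
apply: eq_in_has => k; rewrite mem_iota add0n ltnS => /andP [_ k_le].
by rewrite -cats1 takel_cat.
Qed.

Section DoobMaximal.
Variable F : seq D -> R.
Hypothesis F_ge0 : forall s, 0 <= F s.
Hypothesis F_sub : forall s, F s <= \sum_y kernel s y * F (rcons s y).

Lemma expect_overshoot_ge0 lam n :
  0 <= expect n (fun s => (exceeds lam F s)%:R * (F s - lam)).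
Proof.
elim: n => [|n IHn].
  rewrite expect0 /exceeds /= orbF.
  by case: ltrP; rewrite ?mul0r // mul1r subr_ge0 => /ltW.
rewrite expectS; apply: le_trans IHn _; apply: ler_expect => s _.
have [ex_s|] := boolP (exceeds lam F s).
  rewrite mul1r; under eq_bigr do rewrite exceeds_rcons ex_s mul1r mulrBr.
  by rewrite big_split /= sumrN -mulr_suml kernel_sum1 mul1r lerB.
move=> /negbTE ex_s; rewrite mul0r; apply: sumr_ge0 => y _.
rewrite exceeds_rcons ex_s /= mulr_ge0 //.
by case: ltrP; rewrite ?mul0r // mul1r subr_ge0 => /ltW.
Qed.

Lemma doob_maximal lam n :
  lam * expect n (fun s => (exceeds lam F s)%:R) <= expect n F.
Proof.
have := expect_overshoot_ge0 lam n.
rewrite (_ : expect n _ = expect n (fun s => (exceeds lam F s)%:R * F s)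
  - lam * expect n (fun s => (exceeds lam F s)%:R)); last first.
  by rewrite -expectZ /expect -sumrB; apply: eq_bigr => s _; ring.
rewrite subr_ge0 => /le_trans; apply; apply: ler_expect => s _.
by case: (exceeds _ _ _); rewrite ?mul1r ?mul0r.
Qed.

End DoobMaximal.

End PathSpace.

Lemma sum_if_eq_mul (T : finType) (R : comRingType) (a : T) (u v : R) (F : T -> R) :
  \sum_y (if a == y then u else v) * F y = v * \sum_y F y + (u - v) * F a.
Proof.
rewrite (bigD1 a) //= eqxx [in RHS](bigD1 a) //= mulrDr mulr_sumr.
rewrite (eq_bigr (fun y => v * F y)) => [|y]; first ring.
by rewrite eq_sym => /negbTE ->.
Qed.

Section ERWKernel.
Variables (R : realType) (d : nat) (x0 : dir d).
Hypothesis d_gt0 : (0 < d)%N.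
Local Notation D := ('I_d * bool)%type.

(* The empty history yields the uniform first step; [x0] is only the default of
   [nth], irrelevant for indices below [size s]. *)
Definition erw_kernel (p : R) (s : seq D) (y : D) : R :=
  if s is [::] then (2 * d)%:R^-1 else erw_trans p (size s) (nth x0 s) y.

Definition coord_sum (j : 'I_d) (s : seq D) : R := \sum_(y <- s) dir_coord y j.

(* V_n = S_n^2 / n, with V_0 = 0 since x / 0 = 0. *)
Definition sqr_over_size (j : 'I_d) (s : seq D) : R := coord_sum j s ^+ 2 / (size s)%:R.

Lemma card_dir : #|{: D}| = (2 * d)%N.
Proof. by rewrite card_prod card_ord card_bool mulnC. Qed.

Lemma sum_dir_coord j : \sum_(y : D) dir_coord y j = 0 :> R.
Proof.
rewrite -(pair_bigA _ (fun (i : 'I_d) (b : bool) => dir_coord (i, b) j)) big1 // => i _.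
by rewrite big_bool /dir_coord /=; case: eqP; rewrite ?addr0 ?subrr.
Qed.

Lemma dir_coord_sqr_le1 (y : D) j : dir_coord y j ^+ 2 <= 1 :> R.
Proof. by rewrite /dir_coord; case: eqP; case: y.2; rewrite ?sqrrN ?expr1n ?expr0n. Qed.

Lemma coord_sum_rcons j s y : coord_sum j (rcons s y) = coord_sum j s + dir_coord y j.
Proof. by rewrite /coord_sum -cats1 big_cat big_seq1. Qed.

Lemma coord_sum_nth j s : coord_sum j s = \sum_(k < size s) dir_coord (nth x0 s k) j.
Proof. by rewrite /coord_sum (big_nth x0) big_mkord. Qed.

Let q (p : R) := (1 - p) / (2 * d - 1)%:R.

Let d_neq0 : d%:R != 0 :> R.
Proof. by rewrite pnatr_eq0 -lt0n. Qed.

Let den_eq : (2 * d - 1)%:R = 2 * d%:R - 1 :> R.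
Proof. by rewrite natrB ?muln_gt0 // natrM. Qed.

Let den_neq0 : 2 * d%:R - 1 != 0 :> R.
Proof. have : 1 <= d%:R :> R by rewrite ler1n. by move=> ?; apply: lt0r_neq0; lra. Qed.

Let erw_weights_sum1 p : q p * (2 * d)%:R + (p - q p) = 1.
Proof. by rewrite /q den_eq natrM; field. Qed.

Lemma erw_kernel_ge0 p s y : 0 <= p <= 1 -> 0 <= erw_kernel p s y.
Proof.
case/andP=> p_ge0 p_le1; case: s => [|x s]; first by rewrite invr_ge0.
rewrite mulr_ge0 ?invr_ge0 // sumr_ge0 // => k _; case: ifP => // _.
by rewrite divr_ge0 ?subr_ge0.
Qed.

Lemma erw_kernel_sum1 p s : \sum_y erw_kernel p s y = 1.
Proof.
case: s => [|x s].
  by rewrite sumr_const card_dir -[_ *+ _]mulr_natr mulVf // natrM mulf_neq0.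
rewrite /erw_kernel /erw_trans; set n := size _; rewrite -mulr_sumr exchange_big /=.
under eq_bigr => k _.
  rewrite (eq_bigr (fun y => (if nth x0 (x :: s) k == y then p else q p) * 1)).
    rewrite sum_if_eq_mul sumr_const card_dir mulr1 -mulr_natr mul1r.
    by rewrite erw_weights_sum1; over.
  by move=> y _; rewrite mulr1.
by rewrite sumr_const card_ord -[_ *+ _]mulr_natr mul1r mulVf // pnatr_eq0.
Qed.

Lemma erw_kernel_drift p j s :
  \sum_y erw_kernel p s y * dir_coord y j = (p - q p) / (size s)%:R * coord_sum j s.
Proof.
case: s => [|x s]; first by rewrite -mulr_sumr sum_dir_coord /coord_sum big_nil !mulr0.
rewrite /erw_kernel /erw_trans; set n := size _.
under eq_bigr do rewrite -mulrA mulr_suml.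
rewrite -mulr_sumr exchange_big /=.
under eq_bigr do rewrite sum_if_eq_mul sum_dir_coord mulr0 add0r.
by rewrite -mulr_sumr coord_sum_nth -/n /q; ring.
Qed.

Lemma p_crit_between : 0 <= p_crit (R := R) d <= 1.
Proof.
have : 1 <= d%:R :> R by rewrite ler1n.
rewrite /p_crit natrD !natrM => d_ge1.
by rewrite divr_ge0 ?ler_pdivrMr /=; lra.
Qed.

Lemma p_crit_drift : p_crit d - q (p_crit d) = 2^-1.
Proof. by rewrite /q /p_crit den_eq natrD !natrM; field; rewrite den_neq0 d_neq0. Qed.

Lemma sqr_over_size_rcons_crit j s :
  \sum_y erw_kernel (p_crit d) s y * sqr_over_size j (rcons s y) =
  sqr_over_size j s
  + (\sum_y erw_kernel (p_crit d) s y * dir_coord y j ^+ 2) / (size s).+1%:R.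
Proof.
set K := erw_kernel _ s; set S := coord_sum j s; set n := size s.
have expand y : K y * sqr_over_size j (rcons s y) = (S ^+ 2 * K y
    + 2 * S * (K y * dir_coord y j) + K y * dir_coord y j ^+ 2) / n.+1%:R.
  by rewrite /sqr_over_size coord_sum_rcons size_rcons -/S -/n; ring.
under eq_bigr do rewrite expand.
rewrite -mulr_suml !big_split /= -!mulr_sumr.
rewrite erw_kernel_sum1 erw_kernel_drift p_crit_drift.
rewrite /sqr_over_size -/S -/n; have [n0|n_neq0] := eqVneq n 0%N.
  have S0 : S = 0 by rewrite /S (size0nil n0) /coord_sum big_nil.
  by rewrite S0; ring.
have n_neq0' : n%:R != 0 :> R by rewrite pnatr_eq0.
by rewrite -natr1; field; rewrite n_neq0' addrC natr1 pnatr_eq0.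
Qed.

Lemma erw_kernel_coord_sqr_between p j s : 0 <= p <= 1 ->
  0 <= \sum_y erw_kernel p s y * dir_coord y j ^+ 2 <= 1.
Proof.
move=> p01; rewrite sumr_ge0 => [|y _]; last by rewrite mulr_ge0 ?erw_kernel_ge0 ?sqr_ge0.
rewrite -(erw_kernel_sum1 p s) ler_sum // => y _.
by rewrite ler_piMr ?erw_kernel_ge0 ?dir_coord_sqr_le1.
Qed.

Lemma sqr_over_size_ge0 j s : 0 <= sqr_over_size j s.
Proof. by rewrite divr_ge0 ?sqr_ge0. Qed.

Lemma sqr_over_size_submartingale j s :
  sqr_over_size j s <= \sum_y erw_kernel (p_crit d) s y * sqr_over_size j (rcons s y).
Proof.
have /andP [E_ge0 _] := erw_kernel_coord_sqr_between j s p_crit_between.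
by rewrite sqr_over_size_rcons_crit lerDl divr_ge0.
Qed.

Lemma sqr_over_size_increment j s :
  \sum_y erw_kernel (p_crit d) s y * sqr_over_size j (rcons s y)
    <= sqr_over_size j s + (size s).+1%:R^-1.
Proof.
have /andP [_ E_le1] := erw_kernel_coord_sqr_between j s p_crit_between.
by rewrite sqr_over_size_rcons_crit lerD2l ler_pdivrMr // mulrC mulfV // ler_piMr.
Qed.

End ERWKernel.

Lemma harmonic_exp2_le (R : realFieldType) (q : nat) :
  series (@harmonic R) (2 ^ q)%N <= q.+1%:R.
Proof.
elim: q => [|q IHq]; first by rewrite /series /= big_nat1 invr1.
have le_2q : (2 ^ q <= 2 ^ q.+1)%N by rewrite leq_exp2l.
rewrite /series /= (big_cat_nat (leq0n _) le_2q) -natr1 lerD //.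
apply: le_trans (_ : \sum_(2 ^ q <= k < 2 ^ q.+1) (2 ^ q)%:R^-1 <= 1).
  apply: ler_sum_nat => k /andP [le_k _].
  by rewrite lef_pV2 ?posrE ?ltr0n ?expn_gt0 // ler_nat (leq_trans le_k).
rewrite sumr_const_nat expnS mul2n -addnn addnK -[_ *+ _]mulr_natr.
by rewrite mulVf // pnatr_eq0 expn_eq0.
Qed.


Section Steps.
Variables (T : Type) (d : nat) (X : nat -> T -> dir d).
Local Notation D := ('I_d * bool)%type.

Definition steps (n : nat) (t : T) : seq D := mkseq (X ^~ t) n.

Lemma size_steps n t : size (steps n t) = n.
Proof. exact: size_mkseq. Qed.

Lemma stepsS n t : steps n.+1 t = rcons (steps n t) (X n t).
Proof. by rewrite /steps /mkseq -addn1 iotaD map_cat cats1. Qed.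

Lemma steps_take N k t : (k <= N)%N -> take k (steps N t) = steps k t.
Proof.
move=> le_kN; apply: (@eq_from_nth _ (X 0%N t)); rewrite ?size_takel ?size_steps //.
by move=> i lt_ik; rewrite nth_take // !nth_mkseq // (leq_trans lt_ik).
Qed.

Lemma erw_S_steps (R : realType) k t j : erw_S X k t j = coord_sum R j (steps k t).
Proof.
have iotaE : iota 0 k = index_iota 0 k by rewrite /index_iota subn0.
by rewrite /erw_S /coord_sum big_map iotaE big_mkord.
Qed.

Lemma cyl_steps x0 s : cyl X (size s) (nth x0 s) = [set t | steps (size s) t = s].
Proof.
apply/seteqP; split => t /=; last by move=> steps_t k k_lt; rewrite -steps_t nth_mkseq.
move=> cyl_t; apply: (@eq_from_nth _ x0); rewrite ?size_steps // => k k_lt.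
by rewrite nth_mkseq // cyl_t.
Qed.

Lemma cyl_rcons x0 s y :
  cyl X (size s).+1 (fun k => if k == size s then y else nth x0 s k)
  = [set t | steps (size s).+1 t = rcons s y].
Proof.
rewrite -(size_rcons s y) -(cyl_steps x0) size_rcons; apply/seteqP.
have nth_rcons_lt k : (k < (size s).+1)%N ->
    nth x0 (rcons s y) k = if k == size s then y else nth x0 s k.
  by rewrite nth_rcons ltnS leq_eqVlt; case: ltngtP.
by split=> t /= cyl_t k k_lt; rewrite cyl_t // nth_rcons_lt.
Qed.

End Steps.

Section ERWLaw.
Variables (dT : measure_display) (T : measurableType dT) (R : realType).
Variables (P : probability T R) (d : nat) (X : nat -> T -> dir d).
Hypothesis mX : forall n y, measurable [set t | X n t = y].
Local Notation D := ('I_d * bool)%type.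

Lemma measurable_steps_eq n s : measurable [set t | steps X n t = s].
Proof.
elim: n s => [|n IHn] s.
  case: s => [|y s].
    by rewrite [X in measurable X](_ : _ = setT) //; apply/seteqP; split.
  by rewrite [X in measurable X](_ : _ = set0) //; apply/seteqP; split.
case/lastP: s => [|s y].
  by rewrite [X in measurable X](_ : _ = set0) //; apply/seteqP; split => t.
rewrite [X in measurable X](_ : _ = [set t | steps X n t = s] `&` [set t | X n t = y]).
  exact: measurableI.
apply/seteqP; split => t /=; rewrite stepsS; first by move/rcons_inj => [-> ->].
by case=> -> ->.
Qed.

Lemma measurable_steps_in n (L : seq (seq D)) : measurable [set t | steps X n t \in L].
Proof.
elim: L => [|s L IHL].
  by rewrite [X in measurable X](_ : _ = set0) //; apply/seteqP; split.
rewrite [X in measurable X](_ : _ =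
  [set t | steps X n t = s] `|` [set t | steps X n t \in L]).
  exact: measurableU (measurable_steps_eq n s) IHL.
apply/seteqP; split => t /=; rewrite inE; first by case/orP => [/eqP|]; [left|right].
by case=> [->|t_in_L]; rewrite ?eqxx ?t_in_L ?orbT.
Qed.

Lemma P_steps_in n (L : seq (seq D)) : uniq L ->
  P [set t | steps X n t \in L] = (\sum_(s <- L) P [set t | steps X n t = s])%E.
Proof.
elim: L => [|s L IHL] /=.
  by move=> _; rewrite big_nil -(measure0 P); congr (P _); apply/seteqP; split.
case/andP => s_notin_L uniq_L; rewrite big_cons -IHL // -measureU.
- congr (P _); apply/seteqP; split => t /=; rewrite inE.
    by case/orP => [/eqP|]; [left|right].
  by case=> [->|->]; rewrite ?eqxx ?orbT.
- exact: measurable_steps_eq.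
- exact: measurable_steps_in.
by apply/seteqP; split => t //= [-> s_in_L]; rewrite s_in_L in s_notin_L.
Qed.

Lemma steps_predE n (f : pred (seq D)) :
  [set t | f (steps X n t)] = [set t | steps X n t \in seq.filter f (paths D n)].
Proof.
by apply/seteqP; split => t /=; rewrite mem_filter mem_paths size_steps eqxx andbT.
Qed.

Lemma measurable_steps_pred n (f : pred (seq D)) : measurable [set t | f (steps X n t)].
Proof. by rewrite steps_predE; apply: measurable_steps_in. Qed.

Definition path_law (s : seq D) : R := fine (P [set t | steps X (size s) t = s]).

Lemma P_steps_pred n (f : pred (seq D)) :
  P [set t | f (steps X n t)] = (expect path_law n (fun s => (f s)%:R))%:E.
Proof.
rewrite steps_predE P_steps_in ?filter_uniq ?uniq_paths //.
rewrite big_filter /expect -sumEFin big_mkcond; apply: eq_big_seq => s.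
rewrite mem_paths => /eqP <-; rewrite /path_law; case: (f s); rewrite ?mul0r // mul1r.
by rewrite fineK // fin_num_measure //; apply: measurable_steps_eq.
Qed.

Lemma path_law_nil : path_law [::] = 1.
Proof.
rewrite /path_law [X in P X](_ : _ = setT) ?probability_setT //.
by apply/seteqP; split.
Qed.

Lemma path_law_rcons p x0 s y : is_ERW P p X ->
  path_law (rcons s y) = erw_kernel x0 p s y * path_law s.
Proof.
case=> _ [law_X0 law_step]; case: s => [|x s].
  rewrite path_law_nil mulr1 /path_law /= [X in P X](_ : _ = [set t | X 0%N t = y]).
    by rewrite law_X0.
  by apply/seteqP; split => t; rewrite /= /steps /mkseq /=; [case | move=> ->].
have := law_step _ (nth x0 (x :: s)) y (isT : 0 < size (x :: s))%N.
rewrite cyl_steps cyl_rcons /path_law size_rcons => ->.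
by rewrite fineM // fin_num_measure //; apply: measurable_steps_eq.
Qed.

End ERWLaw.

Lemma ae_eventually_notin (dT : measure_display) (T : measurableType dT) (R : realType)
    (mu : {measure set T -> \bar R}) (F : (set T)^nat) :
  (forall m, measurable (F m)) -> (\sum_(m <oo) mu (F m) < +oo)%E ->
  {ae mu, forall t, \forall m \near \oo, ~ F m t}.
Proof.
move=> mF sumF; exists (lim_sup_set F); split.
- apply: bigcap_measurable => [|k _]; first by exists 0%N.
  by apply: bigcup_measurable.
- exact: lim_sup_set_cvg0.
move=> t /= not_ev n _; apply: contra_notP not_ev => no_k.
by exists n => // m /= le_nm Fmt; apply: no_k; exists m.
Qed.

Lemma eseries_inv_exp2_lty (R : realType) :
  (\sum_(m <oo) (((2 ^ m.+1)%:R : R)^-1)%:E < +oo)%E.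
Proof.
have := @cvg_geometric_eseries_half R 1 0; rewrite [X in X @ _ --> _](_ : _ =
  (fun n => \sum_(0 <= m < n) (((2 ^ m.+1)%:R : R)^-1)%:E)%E).
  by move/cvg_lim => ->; rewrite ?ltry.
by apply: funext => n; apply: eq_bigr => k _; rewrite div1r addn1.
Qed.

Definition block (m : nat) : nat := 2 ^ (4 ^ m).

Definition threshold (R : realType) (m : nat) : R := (2 ^ m.+1 * (4 ^ m.+1).+1)%:R.

Section CriticalERW.
Variables (dT : measure_display) (T : measurableType dT) (R : realType).
Variables (P : probability T R) (d : nat) (X : nat -> T -> dir d).
Hypothesis d_gt0 : (0 < d)%N.
Hypothesis X_erw : is_ERW P (p_crit d) X.
Variables (x0 : dir d) (j : 'I_d).

Let mX : forall n y, measurable [set t | X n t = y] := proj1 X_erw.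
Let K := erw_kernel x0 (p_crit (R := R) d).
Let law := path_law P X.

Let K_ge0 s y : 0 <= K s y.
Proof. exact: erw_kernel_ge0 (p_crit_between R d_gt0). Qed.

Let K_sum1 s : \sum_y K s y = 1.
Proof. exact: erw_kernel_sum1. Qed.

Let law_nil : law [::] = 1.
Proof. exact: path_law_nil. Qed.

Let law_rcons s y : law (rcons s y) = K s y * law s.
Proof. exact: path_law_rcons. Qed.

Lemma expect_sqr_over_size_le n : expect law n (sqr_over_size R j) <= series harmonic n.
Proof.
have := expect_le_increments K_ge0 K_sum1 law_nil law_rcons
  (u := fun k => k.+1%:R^-1) n (sqr_over_size_increment R x0 d_gt0 j).
by rewrite /sqr_over_size /coord_sum big_nil expr0n mul0r add0r /series /= big_mkord.
Qed.

Lemma P_exceeds_le lam n : 0 < lam ->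
  (P [set t | exceeds lam (sqr_over_size R j) (steps X n t)]
    <= (series harmonic n / lam)%:E)%E.
Proof.
move=> lam_gt0; rewrite P_steps_pred // lee_fin ler_pdivlMr // mulrC.
apply: le_trans (expect_sqr_over_size_le n).
exact: (doob_maximal K_ge0 K_sum1 law_nil law_rcons (sqr_over_size_ge0 R j)
  (sqr_over_size_submartingale R x0 d_gt0 j)).
Qed.

Lemma P_exceeds_threshold_le m :
  (P [set t | exceeds (threshold R m) (sqr_over_size R j) (steps X (block m.+1) t)]
    <= ((2 ^ m.+1)%:R^-1)%:E)%E.
Proof.
have threshold_gt0 : 0 < threshold R m by rewrite ltr0n muln_gt0 expn_gt0.
apply: le_trans (P_exceeds_le (block m.+1) threshold_gt0) _; rewrite lee_fin.
rewrite ler_pdivrMr // /threshold natrM mulrA mulVf ?pnatr_eq0 ?expn_eq0 // mul1r.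
exact: harmonic_exp2_le.
Qed.

Lemma ae_below_threshold : {ae P, forall t, \forall m \near \oo,
  ~~ exceeds (threshold R m) (sqr_over_size R j) (steps X (block m.+1) t)}.
Proof.
set bad := fun m =>
  [set t | exceeds (threshold R m) (sqr_over_size R j) (steps X (block m.+1) t)].
have bad_sum : (\sum_(m <oo) P (bad m) < +oo)%E.
  apply: le_lt_trans (eseries_inv_exp2_lty R).
  apply: lee_nneseries => [m _ _|m _]; first exact: measure_ge0.
  exact: P_exceeds_threshold_le.
have mbad m : measurable (bad m) by apply: measurable_steps_pred.
apply: filterS (ae_eventually_notin mbad bad_sum) => t.
by apply: filterS => m /negP.
Qed.

End CriticalERW.

Section PathwiseBound.
Variables (T : Type) (R : realType) (d : nat) (X : nat -> T -> dir d) (j : 'I_d).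

Lemma abs_erw_G_le t N n L : (0 < n <= N)%N ->
  ~~ exceeds L (sqr_over_size R j) (steps X N t) ->
  `|erw_G X n t j| <= Num.sqrt (n%:R * L).
Proof.
move=> /andP [n_gt0 le_nN] /hasPn below.
have below_k k : (k <= N)%N -> erw_S X k t j ^+ 2 <= L * k%:R.
  move=> le_kN; have := below k; rewrite mem_iota size_steps add0n ltnS le_kN => /(_ isT).
  rewrite -leNgt steps_take // /sqr_over_size size_steps -erw_S_steps.
  have [->|k_gt0] := posnP k; first by rewrite /erw_S big_ord0 expr0n mulr0.
  by rewrite ler_pdivrMr ?ltr0n.
have L_ge0 : 0 <= L.
  have := below_k 1%N (leq_trans n_gt0 le_nN); rewrite mulr1; apply: le_trans.
  exact: sqr_ge0.
have S_le k : (k <= n)%N -> `|erw_S X k t j| <= Num.sqrt (n%:R * L).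
  move=> le_kn; rewrite -sqrtr_sqr ler_sqrt ?mulr_ge0 // mulrC.
  by apply: le_trans (below_k k (leq_trans le_kn le_nN)) _; rewrite ler_wpM2l ?ler_nat.
rewrite /erw_G normrM ger0_norm ?invr_ge0 // ler_pdivrMl ?ltr0n //.
apply: le_trans (ler_norm_sum _ _ _) _.
apply: le_trans (_ : \sum_(1 <= k < n.+1) Num.sqrt (n%:R * L) <= _).
  by apply: ler_sum_nat => k /andP [_ le_kn]; apply: S_le.
by rewrite sumr_const_nat subSS subn0 -[_ *+ n]mulr_natl.
Qed.

End PathwiseBound.

Lemma increasing_cover (f : nat -> nat) m0 n : {homo f : a b / (a < b)%N} ->
  (f m0 <= n)%N -> exists2 m, (m0 <= m)%N & (f m <= n < f m.+1)%N.
Proof.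
move=> f_incr le_fn.
have f_ge m : (m <= f m)%N.
  by elim: m => // m IHm; apply: leq_ltn_trans IHm (f_incr _ _ _).
have ex_m : exists m, ((m0 <= m) && (f m <= n))%N by exists m0; rewrite leqnn.
have bound m : ((m0 <= m) && (f m <= n) -> m <= n)%N.
  by case/andP => _; apply: leq_trans (f_ge m).
case: (ex_maxnP ex_m bound) => m /andP [le_m0m le_fm] max_m.
exists m => //; rewrite le_fm ltnNge; apply/negP => le_fSm.
by have := max_m m.+1; rewrite (leq_trans le_m0m) // le_fSm ltnn => /(_ isT).
Qed.

Lemma block_increasing : {homo block : a b / (a < b)%N}.
Proof. by move=> a b lt_ab; rewrite /block ltn_exp2l // ltn_exp2l. Qed.

Lemma block_gt1 m : (1 < block m)%N.
Proof. by rewrite /block -{1}(expn0 2) ltn_exp2l // expn_gt0. Qed.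

Lemma ln2_ge_half (R : realType) : 1 <= 2 * ln (2 : R).
Proof.
have := expR_ge1Dx (- ln (2 : R)); rewrite expRN lnK ?posrE //.
lra.
Qed.

(* From l_m <= 10 * 8^m and log N_m = 4^m log 2 >= 4^m / 2. *)
Lemma sqrt_threshold_div_ln_block_sqr_le (R : realType) m :
  (Num.sqrt (threshold R m) / ln (block m)%:R) ^+ 2 <= 40 / (2 ^ m)%:R.
Proof.
have ln_block : ln (block m)%:R = ln (2 : R) * (2 ^ m)%:R ^+ 2.
  by rewrite /block natrX lnXn // -[_ *+ _]mulr_natr -natrX -expnM mulnC expnM.
have threshold_eq : threshold R m = 2 * (2 ^ m)%:R * (4 * (2 ^ m)%:R ^+ 2 + 1).
  by rewrite /threshold natrM -natr1 !expnS !natrM -natrX -expnM mulnC expnM; ring.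
have a_ge1 : 1 <= (2 ^ m)%:R :> R by rewrite ler1n expn_gt0.
have l_ge := ln2_ge_half R.
rewrite expr_div_n sqr_sqrtr ?ler0n // ln_block threshold_eq.
set a := (2 ^ m)%:R in a_ge1 *; set l := ln 2 in l_ge *.
have a_gt0 : 0 < a by lra.
rewrite ler_pdivrMr ?exprn_gt0 ?mulr_gt0 //; last lra.
rewrite (_ : 40 / a * _ = 40 * l ^+ 2 * a ^+ 3); last by field; rewrite gt_eqF.
have : 10 * a ^+ 3 <= 40 * l ^+ 2 * a ^+ 3.
  by apply: ler_wpM2r; [rewrite exprn_ge0 ?ltW | nra].
suff : 2 * a * (4 * a ^+ 2 + 1) <= 10 * a ^+ 3 by lra.
nra.
Qed.

Lemma sqrt_threshold_div_ln_block_cvg0 (R : realType) :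
  (fun m => Num.sqrt (threshold R m) / ln (block m)%:R) @ \oo --> 0.
Proof.
apply/cvgr0Pnorm_le => e e_gt0.
have [K K_gt] : exists K : nat, 40 / e ^+ 2 < K%:R.
  by exists (Num.bound (40 / e ^+ 2)); apply: archi_boundP; rewrite divr_ge0 ?sqr_ge0.
exists K => // m /= le_Km.
have ratio_ge0 : 0 <= Num.sqrt (threshold R m) / ln (block m)%:R.
  by rewrite divr_ge0 ?sqrtr_ge0 ?ln_ge0 // ler1n (ltnW (block_gt1 m)).
rewrite ger0_norm // -ler_sqr ?nnegrE ?(ltW e_gt0) //.
apply: le_trans (sqrt_threshold_div_ln_block_sqr_le R m) _.
rewrite ler_pdivrMr ?ltr0n ?expn_gt0 //; apply: ltW.
apply: lt_le_trans (_ : K%:R * e ^+ 2 <= _).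
  by rewrite -ltr_pdivrMr ?exprn_gt0.
rewrite mulrC; apply: ler_wpM2l; first exact: sqr_ge0.
by rewrite ler_nat (leq_trans le_Km) // ltnW // ltn_expl.
Qed.

Section ScaledBarycenter.
Variables (T : Type) (R : realType) (d : nat) (X : nat -> T -> dir d) (j : 'I_d) (t : T).

Lemma scaled_erw_G_le m n : (block m <= n < block m.+1)%N ->
  ~~ exceeds (threshold R m) (sqr_over_size R j) (steps X (block m.+1) t) ->
  `|(Num.sqrt n%:R * ln n%:R)^-1 * erw_G X n t j|
    <= Num.sqrt (threshold R m) / ln (block m)%:R.
Proof.
move=> /andP [le_bn lt_nb] below.
have n_gt1 : (1 < n)%N := leq_trans (block_gt1 m) le_bn.
have sqrt_n_gt0 : 0 < Num.sqrt n%:R :> R by rewrite sqrtr_gt0 ltr0n ltnW.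
have ln_b_gt0 : 0 < ln (block m)%:R :> R by rewrite ln_gt0 // ltr1n block_gt1.
have ln_b_le : ln (block m)%:R <= ln n%:R :> R.
  by rewrite ler_ln ?posrE ?ltr0n ?ler_nat ?(ltnW n_gt1) ?(ltnW (block_gt1 m)).
have : `|erw_G X n t j| <= Num.sqrt (n%:R * threshold R m).
  by apply: abs_erw_G_le below; rewrite (ltnW n_gt1) ltnW.
rewrite sqrtrM ?ler0n // => G_le.
have ln_n_gt0 := lt_le_trans ln_b_gt0 ln_b_le.
have A_gt0 := mulr_gt0 sqrt_n_gt0 ln_n_gt0.
rewrite normrM normfV (gtr0_norm A_gt0) mulrC ler_pdivrMr //.
apply: le_trans G_le _.
set sn := Num.sqrt _; set r := Num.sqrt _; set lb := ln _; set ln_n := ln _.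
suff -> : r / lb * (sn * ln_n) = sn * r * (ln_n / lb).
  by rewrite ler_peMr ?mulr_ge0 ?sqrtr_ge0 // ler_pdivlMr // mul1r.
by ring.
Qed.

Lemma scaled_erw_G_cvg0 :
  (\forall m \near \oo,
    ~~ exceeds (threshold R m) (sqr_over_size R j) (steps X (block m.+1) t)) ->
  (fun n => (Num.sqrt n%:R * ln n%:R)^-1 * erw_G X n t j) @ \oo --> (0 : R).
Proof.
move=> below; apply/cvgr0Pnorm_le => e e_gt0.
move/cvgr0Pnorm_le: (@sqrt_threshold_div_ln_block_cvg0 R) => /(_ e e_gt0) ratio_ev.
have [m0 _ good] := filterI below ratio_ev; exists (block m0) => // n /= le_bn.
have [m le_m0m n_in] := increasing_cover block_increasing le_bn.
have [below_m ratio_le] := good m le_m0m.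
apply: le_trans (scaled_erw_G_le n_in below_m) _.
by apply: le_trans ratio_le; rewrite ler_norm.
Qed.

End ScaledBarycenter.

Theorem theorem2p4 (dT : measure_display) (T : measurableType dT)
  (R : realType) (P : probability T R) (d : nat) (X : nat -> T -> dir d) :
  (0 < d)%N ->
  is_ERW P (p_crit (R:=R) d) X ->
  {ae P, forall t, forall j : 'I_d,
     (fun n : nat => (Num.sqrt n%:R * ln n%:R)^-1 * erw_G X n t j) @ \oo --> (0 : R)}.
Proof.
move=> d_gt0 X_erw; pose x0 : dir d := (Ordinal d_gt0, true).
apply: filter_forall => j.
apply: filterS (ae_below_threshold d_gt0 X_erw x0 j) => t.
exact: scaled_erw_G_cvg0.
Qed.
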